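(* Let $p>1$, $p'=\frac{p}{p-1}$, $\alpha\in[0,1]$, and let $\psi_R,\psi_R^*,P(R)$ be as in the context. Let $\delta>0$, $C_0>0$, $R_1>0$, $\theta\geq0$, $T>R_1$, and let $0\leq w\in L^1_{\rm loc}([0,T);L^1(\mathcal{C}_\Sigma))$. Assume that for every $R\in[R_1,T)$, \[ \delta+\iint_{P(R)}w(x,t)\psi_R(x,t)\,dx\,dt\leq C_0R^{-\frac{\theta}{p'}}\left(\iint_{P(R)}w(x,t)\psi_R^*(x,t)\,dx\,dt\right)^{\frac1p}. \] Then \[ T\leq \begin{cases} \left(R_1^{(p-1)\theta}+(\log2)C_0^p\theta\delta^{-(p-1)}\right)^{\frac{1}{(p-1)\theta}}, & \text{if }\theta>0,\\[5pt] \exp\left(\log R_1+(\log2)(p-1)^{-1}C_0^p\delta^{-(p-1)}\right), & \text{if }\theta=0. \end{cases} \]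
   Context: $\mathcal{C}_\Sigma\subset\mathbb{R}^N$ is an open set (a cone $\mathrm{int}\{\rho\omega:\rho\ge0,\omega\in\Sigma\}$ with $\Sigma\subset S^{N-1}$ connected open with smooth boundary if $N\ge2$; $(0,\infty)$ or $\mathbb{R}$ if $N=1$). $\langle x\rangle=(1+|x|^2)^{1/2}$. Fix $\eta\in C^\infty([0,\infty))$ with $\eta=1$ on $[0,1/2]$, $\eta$ decreasing on $(1/2,1)$, $\eta=0$ on $[1,\infty)$; set $\eta^*(s)=0$ for $s\in[0,1/2)$ and $\eta^*(s)=\eta(s)$ for $s\geq1/2$. For $R>0$ let $s_R(x,t)=R^{-1}(\langle x\rangle^{2-\alpha}+t)$, $\psi_R(x,t)=[\eta(s_R(x,t))]^{2p'}$, $\psi_R^*(x,t)=[\eta^*(s_R(x,t))]^{2p'}$ for $(x,t)\in\mathcal{C}_\Sigma\times[0,\infty)$, and $P(R)=\{(x,t)\in\mathcal{C}_\Sigma\times[0,\infty):\langle x\rangle^{2-\alpha}+t\leq R\}$. *)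

From HB Require Import structures.
From mathcomp Require Import all_boot all_order all_algebra.
From mathcomp Require Import all_classical all_reals all_analysis.
Set Implicit Arguments. Unset Strict Implicit. Unset Printing Implicit Defensive.
Import Order.TTheory GRing.Theory Num.Theory.
Import numFieldNormedType.Exports.
Local Open Scope classical_set_scope.
Local Open Scope ring_scope.

Section defs.
Variable R : realType.

(* points of R^N are row vectors 'rV[R]_N (product topology = Euclidean topology) *)
Definition sqnorm (N : nat) (x : 'rV[R]_N) : R := \sum_(i < N) (x 0 i) ^+ 2.

Definition jbr (N : nat) (x : 'rV[R]_N) : R := Num.sqrt (1 + sqnorm x).

Definition unit_sphere (N : nat) : set 'rV[R]_N := [set w | sqnorm w = 1].

(* C is a cone C_Sigma as in the paper (smoothness of the
   boundary of Sigma is not recorded) *)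
Definition cone_domain (N : nat) (C : set 'rV[R]_N) : Prop :=
  if (2 <= N)%N then
    exists Sigma : set 'rV[R]_N,
      [/\ Sigma `<=` unit_sphere (N:=N),
          (exists U : set 'rV[R]_N, open U /\ Sigma = U `&` unit_sphere (N:=N)),
          connected Sigma &
          C = interior [set z | exists rho w, [/\ 0 <= rho, Sigma w & z = rho *: w]]]
  else if N == 1%N then
    C = [set x | forall i, 0 < x 0 i] \/ C = setT
  else False.

(* the fixed cut-off eta (only its values on [0,oo) matter) *)
Definition cutoff (eta : R -> R) : Prop :=
  [/\ (forall n x, 0 <= x -> derivable (derive1n n eta) x 1),
      (forall s, 0 <= s <= 2^-1 -> eta s = 1),
      (forall s t, 2^-1 < s -> s <= t -> t < 1 -> eta t <= eta s) &
      (forall s, 1 <= s -> eta s = 0)].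

Definition eta_star (eta : R -> R) (s : R) : R := if s < 2^-1 then 0 else eta s.

Definition sR (alpha Rr : R) (N : nat) (x : 'rV[R]_N) (t : R) : R :=
  Rr^-1 * ((jbr x) `^ (2 - alpha) + t).

Definition conj_exp (p : R) : R := p / (p - 1).

Definition psiR (eta : R -> R) (p alpha Rr : R) (N : nat) (x : 'rV[R]_N) (t : R) : R :=
  (eta (sR alpha Rr x t)) `^ (2 * conj_exp p).

Definition psiR_star (eta : R -> R) (p alpha Rr : R) (N : nat) (x : 'rV[R]_N) (t : R) : R :=
  (eta_star eta (sR alpha Rr x t)) `^ (2 * conj_exp p).

Definition PR (alpha Rr : R) (N : nat) (C : set 'rV[R]_N) : set ('rV[R]_N * R) :=
  [set z | C z.1 /\ 0 <= z.2 /\ (jbr z.1) `^ (2 - alpha) + z.2 <= Rr].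

Definition tup2row (N : nat) (u : N.-tuple R) : 'rV[R]_N := \row_i tnth u i.

(* N-dimensional Lebesgue integral of a nonnegative function on R^N,
   as the iterated one-dimensional Lebesgue integral (Tonelli) *)
Fixpoint lebN (n : nat) : (n.-tuple R -> \bar R) -> \bar R :=
  match n as m return (m.-tuple R -> \bar R) -> \bar R with
  | 0%N => fun f => f [tuple]
  | m.+1 => fun f => (\int[@lebesgue_measure R]_(x in [set: R])
                        lebN (fun u : m.-tuple R => f [tuple of x :: u]))%E
  end.

Definition iint (N : nat) (D : set ('rV[R]_N * R)) (f : 'rV[R]_N -> R -> R) : \bar R :=
  (\int[@lebesgue_measure R]_(t in [set: R])
     lebN (fun u : N.-tuple R =>
             if (tup2row u, t) \in D then (f (tup2row u) t)%:E else 0%E))%E.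

End defs.

From HB Require Import structures.
From mathcomp Require Import all_boot all_order all_algebra.
From mathcomp Require Import all_classical all_reals all_analysis.
From mathcomp Require Import ring lra.
Import Order.TTheory GRing.Theory Num.Theory.
Import numFieldNormedType.Exports.

(* Write J(r) and I(r) for the integrals of w psi*_r and w psi_r over P(r), and
   discretize r along the geometric grid r_j = R1 e^(j d).  Since psi*_r lives on
   the shell r/2 <= <x>^(2-alpha) + t < r, where eta is nonincreasing, psi*_(r_j)
   <= psi_(r_m) there for j <= m, and each point lies in at most (ln 2 + d)/d of
   these shells; hence k sum_(j <= m) J(r_j) <= I(r_m) with k = d/(ln 2 + d).
   The hypothesis then yields the discrete differential inequality
   (delta + k sum_(j <= m) J(r_j))^p r_m^(theta (p-1)) <= C0^p J(r_m), which
   telescopes, by the convexity of y^(1-p), to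
   (p-1) d sum_(m < M) r_(m+1)^(theta (p-1)) <= C0^p (ln 2 + d) delta^(1-p)
   whenever r_M < T.  Letting d -> 0 with r_M = T' fixed, the left side becomes
   (p-1) times the integral of r^(theta (p-1)) dr/r from R1 to T'. *)

Set Implicit Arguments.
Unset Strict Implicit.
Unset Printing Implicit Defensive.

Local Open Scope classical_set_scope.
Local Open Scope ring_scope.

Section ge0_superlinear.
Context {R : realType}.
Local Open Scope ereal_scope.

(* The integrands are never shown to be measurable, so integrals are only
   compared through the properties below, which the integral of a nonnegative
   function (a supremum over the simple functions below it) has without any
   measurability assumption. *)
Definition ge0_superlinear (X : Type) (Phi : (X -> \bar R) -> \bar R) : Prop :=
  [/\ forall f, (forall x, 0 <= f x) -> 0 <= Phi f,
      forall f g, (forall x, 0 <= f x) -> (forall x, f x <= g x) -> Phi f <= Phi g,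
      forall k f, (0 <= k)%R -> (forall x, 0 <= f x) ->
        k%:E * Phi f <= Phi (fun x => k%:E * f x) &
      forall f g, (forall x, 0 <= f x) -> (forall x, 0 <= g x) ->
        Phi f + Phi g <= Phi (fun x => f x + g x)].

Lemma ge0_superlinear_sum (X : Type) (I : eqType) (Phi : (X -> \bar R) -> \bar R)
    (s : seq I) (F : I -> X -> \bar R) :
  ge0_superlinear Phi -> (forall i x, i \in s -> 0 <= F i x) ->
  \sum_(i <- s) Phi (F i) <= Phi (fun x => \sum_(i <- s) F i x).
Proof.
case=> Phi0 Phi_le _ PhiD; elim: s => [|i s IHs] F0.
  by rewrite big_nil; apply: Phi0 => x; rewrite big_nil.
have Fi0 x : 0 <= F i x by apply: F0; rewrite mem_head.
have Fs0 j x : j \in s -> 0 <= F j x by move=> js; apply: F0; rewrite in_cons js orbT.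
have sum0 x : 0 <= \sum_(j <- s) F j x by rewrite big_seq; apply: sume_ge0 => j /Fs0.
rewrite big_cons; apply: le_trans (leeD2l _ (IHs Fs0)) _.
apply: le_trans (PhiD _ _ Fi0 sum0) _; apply: Phi_le => x; first exact: adde_ge0.
by rewrite big_cons.
Qed.

Lemma ge0_superlinear_iter (X Y Z : Type) (Psi : (Y -> \bar R) -> \bar R)
    (Phi : (X -> \bar R) -> \bar R) (c : Y -> X -> Z) :
  ge0_superlinear Psi -> ge0_superlinear Phi ->
  ge0_superlinear (fun f : Z -> \bar R => Psi (fun y => Phi (fun x => f (c y x)))).
Proof.
case=> Psi0 Psi_le PsiZ PsiD [Phi0 Phi_le PhiZ PhiD]; split.
- by move=> f f0; apply: Psi0 => y; apply: Phi0.
- move=> f g f0 fg; apply: Psi_le => y; first exact: Phi0.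
  exact: Phi_le.
- move=> k f k0 f0; apply: le_trans (PsiZ _ _ k0 _) _ => [y|]; first exact: Phi0.
  apply: Psi_le => y; first by rewrite mule_ge0 ?lee_fin ?Phi0.
  exact: PhiZ.
- move=> f g f0 g0; apply: le_trans (PsiD _ _ _ _) _ => [y|y|]; try exact: Phi0.
  apply: Psi_le => y; first by rewrite adde_ge0 ?Phi0.
  exact: PhiD.
Qed.

End ge0_superlinear.

Section integralT.
Context d (T : measurableType d) (R : realType).
Variable mu : {measure set T -> \bar R}.
Local Open Scope ereal_scope.
Import HBNNSimple.

Lemma integralT_le (f g : T -> \bar R) : (forall x, 0 <= f x) ->
  (forall x, f x <= g x) -> \int[mu]_x f x <= \int[mu]_x g x.
Proof.
move=> f0 fg; have g0 x : 0 <= g x by exact: le_trans (f0 x) (fg x).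
rewrite !ge0_integralTE//; apply: ge_ereal_sup => _ [h /= hf <-].
by apply: ereal_sup_ubound; exists h => //= x; exact: le_trans (hf x) (fg x).
Qed.

Lemma integralT_scale_le (k : R) (f : T -> \bar R) : (0 <= k)%R ->
  (forall x, 0 <= f x) -> k%:E * \int[mu]_x f x <= \int[mu]_x (k%:E * f x).
Proof.
move=> k0 f0; have [->|kn0] := eqVneq k 0%R.
  by rewrite mul0e; apply: integral_ge0 => x _; rewrite mul0e.
have kp : (0 < k)%R by rewrite lt0r kn0.
have kf0 x : 0 <= k%:E * f x by rewrite mule_ge0.
rewrite !ge0_integralTE// -ereal_sup_pZl//.
apply: ge_ereal_sup => _ [_ [h /= hf <-] <-].
apply: ereal_sup_ubound; exists (scale_nnsfun h k0) => /=.
  by move=> x; rewrite /= EFinM lee_pmul2l ?lte_fin.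
by rewrite sintegralrM.
Qed.

Lemma integralT_add_le (f g : T -> \bar R) : (forall x, 0 <= f x) ->
  (forall x, 0 <= g x) ->
  \int[mu]_x f x + \int[mu]_x g x <= \int[mu]_x (f x + g x).
Proof.
move=> f0 g0; have fg0 x : 0 <= f x + g x by rewrite adde_ge0.
rewrite !ge0_integralTE//.
set A := [set _ | _ in _]; set B := [set _ | _ in _]; set S := [set _ | _ in _].
have AB_le a b : A a -> B b -> a + b <= ereal_sup S.
  move: a b => _ _ [h1 /= h1f <-] [h2 /= h2g <-]; rewrite -sintegralD.
  apply: ereal_sup_ubound; exists (add_nnsfun h1 h2) => //= x.
  by rewrite EFinD leeD.
have A0 : A 0 by exists nnsfun0; [move=> x /=; exact: f0 | exact: sintegral0].
have B0 : B 0 by exists nnsfun0; [move=> x /=; exact: g0 | exact: sintegral0].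
have A_ge0 a : A a -> 0 <= a by case=> h _ <-; exact: sintegral_ge0.
have B_ge0 b : B b -> 0 <= b by case=> h _ <-; exact: sintegral_ge0.
have [->|/negbTE S_fin] := eqVneq (ereal_sup S) +oo; first exact: leey.
have S_lt : ereal_sup S < +oo by rewrite ltey S_fin.
have A_fin a : A a -> a \is a fin_num.
  move=> Aa; rewrite ge0_fin_numE ?A_ge0//; apply: le_lt_trans S_lt.
  by rewrite -[a]adde0 AB_le.
have B_fin b : B b -> b \is a fin_num.
  move=> Bb; rewrite ge0_fin_numE ?B_ge0//; apply: le_lt_trans S_lt.
  by rewrite -[b]add0e AB_le.
have supA_fin : ereal_sup A \is a fin_num.
  rewrite ge0_fin_numE; last exact: ereal_sup_ubound A0.
  apply: le_lt_trans S_lt; apply: ge_ereal_sup => a Aa.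
  by rewrite -[a]adde0 AB_le.
rewrite -leeBrDl//; apply: ge_ereal_sup => b Bb; rewrite leeBrDl// -leeBrDr ?B_fin//.
by apply: ge_ereal_sup => a Aa; rewrite leeBrDr ?B_fin ?AB_le.
Qed.

Lemma integralT_ge0_superlinear :
  ge0_superlinear (fun f : T -> \bar R => \int[mu]_x f x).
Proof.
split; [|exact: integralT_le|exact: integralT_scale_le|exact: integralT_add_le].
by move=> f f0; apply: integral_ge0 => x _.
Qed.

End integralT.

Section iint_ge0_superlinear.
Context {R : realType} {N : nat}.
Local Open Scope ereal_scope.

Lemma lebN_ge0_superlinear n : ge0_superlinear (@lebN R n).
Proof.
elim: n => [|n IHn]; first by split=> //= f g _; apply.
exact: (ge0_superlinear_iter (fun x (u : n.-tuple R) => [tuple of x :: u])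
  (integralT_ge0_superlinear lebesgue_measure) IHn).
Qed.

Let Iint (F : N.-tuple R * R -> \bar R) :=
  \int[@lebesgue_measure R]_t lebN (fun u => F (u, t)).

Let Iint_ge0_superlinear : ge0_superlinear Iint.
Proof.
exact: (ge0_superlinear_iter (fun t (u : N.-tuple R) => (u, t))
  (integralT_ge0_superlinear lebesgue_measure) (@lebN_ge0_superlinear N)).
Qed.

Let iintE (D : set ('rV[R]_N * R)) (f : 'rV[R]_N -> R -> R) :
  iint D f = Iint (fun z => ((uncurry f \_ D) (tup2row z.1, z.2))%:E).
Proof.
rewrite /iint /Iint /patch; congr integral; apply: funext => t.
by congr lebN; apply: funext => u; case: ifP.
Qed.

Lemma iint_ge0 (D : set ('rV[R]_N * R)) (f : 'rV[R]_N -> R -> R) :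
  (forall z, (0 <= (uncurry f \_ D) z)%R) -> 0 <= iint D f.
Proof.
by move=> f0; rewrite iintE; case: Iint_ge0_superlinear => + _ _ _; apply=> z;
  rewrite lee_fin.
Qed.

Lemma le_iint (D D' : set ('rV[R]_N * R)) (f g : 'rV[R]_N -> R -> R) :
  (forall z, (0 <= (uncurry f \_ D) z)%R) ->
  (forall z, ((uncurry f \_ D) z <= (uncurry g \_ D') z)%R) ->
  iint D f <= iint D' g.
Proof.
move=> f0 fg; rewrite !iintE; case: Iint_ge0_superlinear => _ + _ _; apply.
  by move=> z; rewrite lee_fin.
by move=> z; rewrite lee_fin.
Qed.

Lemma sum_iint_le (I : eqType) (s : seq I) (k : R) (D : I -> set ('rV[R]_N * R))
    (f : I -> 'rV[R]_N -> R -> R) (D' : set ('rV[R]_N * R)) (g : 'rV[R]_N -> R -> R) :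
  (0 <= k)%R -> (forall i z, i \in s -> (0 <= (uncurry (f i) \_ (D i)) z)%R) ->
  (forall z, (\sum_(i <- s) k * (uncurry (f i) \_ (D i)) z <= (uncurry g \_ D') z)%R) ->
  \sum_(i <- s) k%:E * iint (D i) (f i) <= iint D' g.
Proof.
move=> k0 f0 fg; have [Phi0 Phi_le PhiZ _] := Iint_ge0_superlinear.
rewrite iintE; under eq_bigr do rewrite iintE.
pose F i (z : N.-tuple R * R) := ((uncurry (f i) \_ (D i)) (tup2row z.1, z.2))%:E.
have kF0 i z : i \in s -> 0 <= k%:E * F i z by move=> si; rewrite mule_ge0 ?lee_fin ?f0.
apply: le_trans (_ : _ <= \sum_(i <- s) Iint (fun z => k%:E * F i z)) _.
  by rewrite big_seq [leRHS]big_seq; apply: lee_sum => i si; apply: PhiZ => // z;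
    rewrite lee_fin f0.
apply: le_trans (ge0_superlinear_sum Iint_ge0_superlinear kF0) _.
apply: Phi_le => [z|z]; first by rewrite big_seq; apply: sume_ge0 => i /kF0.
rewrite /F; under eq_bigr do rewrite -EFinM.
by rewrite sumEFin lee_fin.
Qed.

End iint_ge0_superlinear.

Section cutoff.
Context {R : realType} (eta : R -> R).
Hypothesis eta_cutoff : cutoff eta.

Lemma cutoff_continuous (a : R) : 0 <= a -> eta x @[x --> a] --> eta a.
Proof.
case: eta_cutoff => eta_smooth _ _ _ a0.
have /derivable1_diffP := eta_smooth 0%N a a0.
exact: differentiable_continuous.
Qed.

Lemma cutoff_le1 s : 0 <= s -> eta s <= 1.
Proof.
move=> s0; case: eta_cutoff => _ eta1 eta_dec eta0.
have [s_le|s_gt] := lerP s 2^-1; first by rewrite eta1 ?s0.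
have [s_ge1|s_lt1] := lerP 1 s; first by rewrite eta0.
have half_ge0 : (0 : R) <= 2^-1 by rewrite invr_ge0.
have eta_half : eta t @[t --> (2^-1)^'+] --> (1 : R).
  apply: cvg_at_right_filter; have := cutoff_continuous half_ge0.
  by rewrite eta1 // half_ge0 lexx.
have near_half : \forall t \near (2^-1)^'+, eta s <= eta t.
  near=> t; apply: (eta_dec t s _ _ s_lt1).
    by near: t; exact: nbhs_right_gt.
  by near: t; exact: nbhs_right_le.
exact: cvgr_to_ge eta_half near_half.
Unshelve. all: by end_near.
Qed.

Lemma cutoff_ge0 s : 0 <= s -> 0 <= eta s.
Proof.
move=> s0; case: eta_cutoff => _ eta1 eta_dec eta0.
have [s_le|s_gt] := lerP s 2^-1; first by rewrite eta1 ?s0.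
have [s_ge1|s_lt1] := lerP 1 s; first by rewrite eta0.
have eta_one : eta t @[t --> 1^'-] --> (0 : R).
  apply: cvg_at_left_filter; have := cutoff_continuous ler01.
  by rewrite eta0.
have near_one : \forall t \near 1^'-, eta t <= eta s.
  near=> t; apply: (eta_dec s t s_gt).
    by near: t; exact: nbhs_left_ge.
  by near: t; exact: nbhs_left_lt.
exact: cvgr_to_le eta_one near_one.
Unshelve. all: by end_near.
Qed.

Lemma cutoff_le s s' : 0 <= s -> s <= s' -> 2^-1 <= s' -> eta s' <= eta s.
Proof.
move=> s0 ss' s'_ge; have s'0 := le_trans s0 ss'.
case: eta_cutoff => _ eta1 eta_dec eta0.
have [s'_ge1|s'_lt1] := lerP 1 s'; first by rewrite eta0 ?cutoff_ge0.
have [s_le|s_gt] := lerP s 2^-1; first by rewrite (eta1 s) ?s0 ?cutoff_le1.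
exact: eta_dec.
Qed.

End cutoff.

Lemma sum_grid_le {R : realType} (a b c d : R) (m : nat) : 0 < d -> a <= b ->
  \sum_(j < m) (if a < c + j.+1%:R * d <= b then d else 0) <= b - a + d.
Proof.
move=> d0 ab; pose x k := c + k%:R * d.
pose S k := \sum_(j < k) (if a < x j.+1 <= b then d else 0).
suff /(_ m) [] : forall k, [/\ x k <= a -> S k = 0, S k <= b - a + d &
                              a < x k -> S k <= x k - a + d] by [].
elim=> [|k [IH0 IHb IHx]]; first by rewrite /S big_ord0; split=> //; lra.
have xS : x k.+1 = x k + d by rewrite /x -addn1 natrD mulrDl mul1r addrA.
rewrite /S big_ord_recr /= -/(S k) xS.
have [xa|ax] := lerP (x k) a.
  rewrite IH0 // add0r; split; case: ifP => /= [/andP[]|_] //; lra.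
by move: (IHx ax) IHb; split; case: ifP => /= [/andP[]|_]; lra.
Qed.

Definition grid {R : realType} (r0 d : R) (j : nat) : R := r0 * expR (j%:R * d).

Lemma grid0 {R : realType} (r0 d : R) : grid r0 d 0 = r0.
Proof. by rewrite /grid mul0r expR0 mulr1. Qed.

Lemma grid_gt0 {R : realType} (r0 d : R) j : 0 < r0 -> 0 < grid r0 d j.
Proof. by move=> r00; rewrite mulr_gt0 ?expR_gt0. Qed.

Lemma grid_le {R : realType} (r0 d : R) i j : 0 < r0 -> 0 <= d -> (i <= j)%N ->
  grid r0 d i <= grid r0 d j.
Proof. by move=> r00 d0 ij; rewrite ler_pM2l // ler_expR ler_wpM2r // ler_nat. Qed.

Lemma ln_grid {R : realType} (r0 d : R) j : 0 < r0 -> ln (grid r0 d j) = ln r0 + j%:R * d.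
Proof. by move=> r00; rewrite lnM ?posrE ?expR_gt0 // expRK. Qed.

Lemma grid_endpoint {R : realType} (r0 L : R) (M : nat) : (0 < M)%N ->
  grid r0 (L / M%:R) M = r0 * expR L.
Proof. by move=> M0; rewrite /grid [M%:R * _]mulrC divfK // pnatr_eq0 -lt0n. Qed.

Section psi.
Context {R : realType} {N : nat} (C : set 'rV[R]_N) (eta : R -> R) (p alpha : R).
Hypothesis eta_cutoff : cutoff eta.
Hypothesis p_gt1 : 1 < p.

Let psi_exp_gt0 : 0 < 2 * conj_exp p.
Proof. by rewrite mulr_gt0 // divr_gt0 ?subr_gt0 // (lt_trans ltr01). Qed.

Lemma PR_le r (x : 'rV[R]_N) t : PR alpha r C (x, t) -> [/\ C x, 0 <= t & t <= r].
Proof. by case=> /= Cx [t0 le_r]; split=> //; apply: le_trans le_r; rewrite lerDr powR_ge0. Qed.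

Lemma eta_star_ge0_le1 s : 0 <= eta_star eta s <= 1.
Proof.
rewrite /eta_star; case: ltP => [_|s_ge]; first by rewrite lexx ler01.
have s0 : 0 <= s by apply: le_trans s_ge; rewrite invr_ge0.
by rewrite cutoff_ge0 ?cutoff_le1.
Qed.

Lemma psiR_star_le1 r (x : 'rV[R]_N) t : psiR_star eta p alpha r x t <= 1.
Proof.
have /andP[eta0 eta1] := eta_star_ge0_le1 (sR alpha r x t).
by have := ge0_ler_powR (ltW psi_exp_gt0) eta0 ler01 eta1; rewrite powR1.
Qed.

Variable w : 'rV[R]_N -> R -> R.

Definition wpsiR r : 'rV[R]_N * R -> R :=
  uncurry (fun x t => w x t * psiR eta p alpha r x t) \_ (PR alpha r C).

Definition wpsiR_star r : 'rV[R]_N * R -> R :=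
  uncurry (fun x t => w x t * psiR_star eta p alpha r x t) \_ (PR alpha r C).

Lemma wpsiR_ge0 r z : (PR alpha r C z -> 0 <= w z.1 z.2) -> 0 <= wpsiR r z.
Proof.
rewrite /wpsiR /patch; case: ifP => // /[1!in_setE] + w0.
by case: z w0 => x t /= w0 /w0 w_ge0; exact: mulr_ge0 w_ge0 (powR_ge0 _ _).
Qed.

Lemma wpsiR_star_ge0 r z : (PR alpha r C z -> 0 <= w z.1 z.2) -> 0 <= wpsiR_star r z.
Proof.
rewrite /wpsiR_star /patch; case: ifP => // /[1!in_setE] + w0.
by case: z w0 => x t /= w0 /w0 w_ge0; exact: mulr_ge0 w_ge0 (powR_ge0 _ _).
Qed.

Lemma wpsiR_star_le_wpsiR r r' (x : 'rV[R]_N) t :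
  0 < r -> r <= r' -> (PR alpha r' C (x, t) -> 0 <= w x t) ->
  wpsiR_star r (x, t) <=
    if (jbr x `^ (2 - alpha) + t < r) && (r <= 2 * (jbr x `^ (2 - alpha) + t))
    then wpsiR r' (x, t) else 0.
Proof.
move=> r0 rr' w0; rewrite /wpsiR_star /patch /=.
set f := jbr x `^ (2 - alpha) + t.
have rhs0 : 0 <= if (f < r) && (r <= 2 * f) then wpsiR r' (x, t) else 0.
  by case: ifP => // _; exact: wpsiR_ge0.
case: ifP => // /[1!in_setE] xt_r.
have xt_r' : PR alpha r' C (x, t).
  by case: xt_r => Cx [t0 le_r]; split=> //; split=> //; apply: le_trans rr'.
have f_le : f <= r by case: xt_r => _ [].
have f0 : 0 <= f by rewrite addr_ge0 ?powR_ge0 //; case: xt_r => _ [].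
rewrite /psiR_star /sR -/f /eta_star.
set s := r^-1 * f.
have s0 : 0 <= s by rewrite mulr_ge0 // invr_ge0 ltW.
have [s_lt|s_ge] := ltP s 2^-1; first by rewrite powR0 ?mulr0 // gt_eqF.
have [f_eq|f_neq] := eqVneq f r.
  have -> : s = 1 by rewrite /s f_eq mulVf // gt_eqF.
  by case: eta_cutoff => _ _ _ ->; rewrite // powR0 ?mulr0 // gt_eqF.
have f_lt : f < r by rewrite lt_neqAle f_neq f_le.
have r_le : r <= 2 * f.
  have : r * 2^-1 <= r * s by rewrite ler_pM2l.
  by rewrite /s mulrA mulfV ?gt_eqF // mul1r; lra.
rewrite f_lt r_le /wpsiR /patch (mem_set xt_r') /= /psiR /sR -/f.
apply: ler_wpM2l; first exact: w0.
have r'0 : 0 < r' := lt_le_trans r0 rr'.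
have s'0 : 0 <= r'^-1 * f by rewrite mulr_ge0 // invr_ge0 ltW.
apply: ge0_ler_powR; rewrite ?nnegrE; first exact: ltW.
- exact: cutoff_ge0.
- exact: cutoff_ge0.
by apply: cutoff_le => //; rewrite ler_wpM2r // lef_pV2.
Qed.

Lemma grid_wpsiR_star_sum_le (r0 d : R) (m : nat) (x : 'rV[R]_N) t :
  0 < r0 -> 0 < d -> (PR alpha (grid r0 d m.+1) C (x, t) -> 0 <= w x t) ->
  \sum_(j < m.+1) d / (ln 2 + d) * wpsiR_star (grid r0 d j.+1) (x, t)
  <= wpsiR (grid r0 d m.+1) (x, t).
Proof.
move=> r00 d0 w0; set h := wpsiR _ (x, t); set f := jbr x `^ (2 - alpha) + t.
have L0 : 0 < ln 2 + d by rewrite addr_gt0 // ln_gt0 // ltr1n.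
have h0 : 0 <= h by exact: wpsiR_ge0.
pose in_range j := (f < grid r0 d j.+1) && (grid r0 d j.+1 <= 2 * f).
apply: le_trans (_ : _ <= \sum_(j < m.+1) (if in_range j then d else 0) * (h / (ln 2 + d))) _.
  apply: ler_sum => j _.
  have := wpsiR_star_le_wpsiR (grid_gt0 d j.+1 r00) (grid_le r00 (ltW d0) (ltn_ord j)) w0.
  move=> /(ler_wpM2l (divr_ge0 (ltW d0) (ltW L0))) /le_trans; apply.
  by rewrite /in_range; case: ifP => _; rewrite ?mulr0 ?mul0r // mulrA mulrAC.
rewrite -mulr_suml.
suff sum_le : \sum_(j < m.+1) (if in_range j then d else 0) <= ln 2 + d.
  apply: le_trans (ler_wpM2r (divr_ge0 h0 (ltW L0)) sum_le) _.
  by rewrite mulrC divfK ?gt_eqF.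
have [f_le0|f_gt0] := lerP f 0.
  rewrite big1 ?ltW // => j _; rewrite /in_range ifF //; apply/negbTE.
  by rewrite negb_and -!ltNge; apply/orP; right; have := grid_gt0 d j.+1 r00; lra.
have log_range j : in_range j =
    (ln f < ln r0 + j.+1%:R * d <= ln 2 + ln f).
  by rewrite /in_range -ln_grid // -lnM ?posrE // ltr_ln ?ler_ln ?posrE ?grid_gt0 ?mulr_gt0.
under eq_bigr do rewrite log_range.
have lnf_le : ln f <= ln 2 + ln f by rewrite lerDr ln_ge0 // ler1n.
by apply: le_trans (sum_grid_le (ln r0) m.+1 d0 lnf_le) _; lra.
Qed.

End psi.

Section real_inequalities.
Context {R : realType}.
Implicit Types (a b c d k p q u x y : R).

Lemma mul_onem_expR_le q u : 0 <= q -> q * (1 - expR u) <= expR (- (q * u)) - 1.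
Proof. by move=> q0; have := expR_ge1Dx u; have := expR_ge1Dx (- (q * u)); nra. Qed.

Lemma powR_tangent_le a b p : 1 <= p -> 0 < a -> 0 < b ->
  (p - 1) * (b `^ (- p) * (b - a)) <= a `^ (1 - p) - b `^ (1 - p).
Proof.
move=> p1 a0 b0; have powRE x r : 0 < x -> x `^ r = expR (r * ln x).
  by move=> x0; rewrite /powR gt_eqF.
rewrite !powRE // -[in b - a](lnK (a0 : a \in Num.pos)).
rewrite -[in b - _](lnK (b0 : b \in Num.pos)).
set u := ln a - ln b; set E := expR ((1 - p) * ln b).
have -> : expR ((1 - p) * ln a) = E * expR (- ((p - 1) * u)).
  by rewrite -expRD; congr expR; rewrite /u; ring.
have -> : expR (- p * ln b) * (expR (ln b) - expR (ln a)) = E * (1 - expR u).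
  rewrite mulrBr -!expRD /E mulrBr mulr1 -expRD.
  by congr (expR _ - expR _); rewrite /u; ring.
have E0 : 0 <= E by rewrite ltW ?expR_gt0.
rewrite mulrCA -[X in _ <= _ - X]mulr1 -mulrBr ler_wpM2l //.
by apply: mul_onem_expR_le; rewrite subr_ge0.
Qed.

Lemma discrete_comparison (M : nat) k (delta K : R) p (J W : nat -> R) :
  0 <= k -> 0 < delta -> 0 <= K -> 1 < p -> (forall m, (m < M)%N -> 0 <= J m) ->
  (forall m, (m < M)%N -> (delta + k * \sum_(j < m.+1) J j) `^ p * W m <= K * J m) ->
  (p - 1) * k * \sum_(m < M) W m <= K * delta `^ (1 - p).
Proof.
move=> k0 delta0 K0 p1 J0 JW; pose Z m := delta + k * \sum_(j < m) J j.
have Z_gt0 m : (m <= M)%N -> 0 < Z m.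
  move=> mM; rewrite ltr_wpDr // mulr_ge0 // sumr_ge0 // => j _.
  exact/J0/(leq_trans (ltn_ord j)).
have step m : (m < M)%N ->
    (p - 1) * k * W m <= K * (Z m `^ (1 - p) - Z m.+1 `^ (1 - p)).
  move=> mM; have Zm0 := Z_gt0 _ (ltnW mM); have ZS0 := Z_gt0 _ mM.
  have ZS : Z m.+1 - Z m = k * J m by rewrite /Z big_ord_recr /=; ring.
  have Zp0 : 0 < Z m.+1 `^ p by rewrite powR_gt0.
  have W_le : W m <= K * J m * Z m.+1 `^ (- p).
    by rewrite powRN ler_pdivlMr // mulrC JW.
  apply: le_trans (_ : _ <= (p - 1) * k * (K * J m * Z m.+1 `^ (- p))) _.
    by rewrite ler_wpM2l // mulr_ge0 // subr_ge0 ltW.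
  rewrite [leLHS](_ : _ = K * ((p - 1) * (Z m.+1 `^ (- p) * (Z m.+1 - Z m)))).
    by rewrite ler_wpM2l // powR_tangent_le // ltW.
  by rewrite ZS; ring.
have telescope : \sum_(m < M) (Z m `^ (1 - p) - Z m.+1 `^ (1 - p)) =
    Z 0 `^ (1 - p) - Z M `^ (1 - p).
  rewrite -(big_mkord xpredT (fun m => Z m `^ (1 - p) - Z m.+1 `^ (1 - p))).
  by rewrite (@telescope_sumr_eq _ 0 M (fun m => - Z m `^ (1 - p))) // => [|m _];
    rewrite opprK addrC.
rewrite mulr_sumr.
apply: le_trans (_ : _ <= \sum_(m < M) K * (Z m `^ (1 - p) - Z m.+1 `^ (1 - p))) _.
  by apply: ler_sum => m _; exact: step.
rewrite -mulr_sumr telescope /Z big_ord0 mulr0 addr0 ler_wpM2l //.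
by rewrite gerBl powR_ge0.
Qed.

Lemma expR_riemann_le a d (M : nat) : 0 < a -> 0 <= d ->
  (expR (a * (M%:R * d)) - 1) / a <= \sum_(m < M) d * expR (a * (m.+1%:R * d)).
Proof.
move=> a0 d0; pose g m := expR (a * (m%:R * d)) / a.
have -> : (expR (a * (M%:R * d)) - 1) / a = \sum_(m < M) (g m.+1 - g m).
  rewrite -(big_mkord xpredT (fun m => g m.+1 - g m)) telescope_sumr //.
  by rewrite /g mul0r mulr0 expR0 mulrBl.
apply: ler_sum => m _; rewrite /g -mulrBl ler_pdivrMr //.
have -> : expR (a * (m%:R * d)) = expR (a * (m.+1%:R * d)) * expR (- (a * d)).
  by rewrite -expRD; congr expR; rewrite -addn1 natrD; ring.
have := expR_ge1Dx (- (a * d)); have := expR_gt0 (a * (m.+1%:R * d)).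
by nra.
Qed.

Lemma le_of_le_addn x y c : (forall M : nat, (0 < M)%N -> x <= y + c / M%:R) -> x <= y.
Proof.
move=> le_xy; apply/ler_addgt0Pr => e e0.
have M_gt := truncnS_gt (c / e); set M := (Num.truncn (c / e)).+1 in M_gt.
apply: le_trans (le_xy M isT) _; rewrite lerD2l ler_pdivrMr ?ltr0n //.
by rewrite mulrC -ler_pdivrMr // ltW.
Qed.

Lemma le_of_forall_lt a b c : a < b -> (forall x, a < x < b -> x <= c) -> b <= c.
Proof.
move=> ab le_c; rewrite leNgt; apply/negP => cb.
have [m am_mb cm] : exists2 m, a < m < b & c < m.
  have [ac|ca] := lerP a c.
    by exists ((c + b) / 2); [apply/andP; split|]; lra.
  by exists ((a + b) / 2); [apply/andP; split|]; lra.
by have := le_c m am_mb; lra.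
Qed.

Lemma powR_conj_le y c rho theta J p : 1 < p -> 0 <= y -> 0 <= c -> 0 < rho -> 0 <= J ->
  y <= c * rho `^ (- (theta / conj_exp p)) * J `^ p^-1 ->
  y `^ p * rho `^ (theta * (p - 1)) <= c `^ p * J.
Proof.
move=> p1 y0 c0 rho0 J0 y_le; have p0 : 0 < p by exact: lt_trans p1.
have rhs0 : 0 <= c * rho `^ (- (theta / conj_exp p)) * J `^ p^-1.
  by rewrite !mulr_ge0 ?powR_ge0.
have := ge0_ler_powR (ltW p0) y0 rhs0 y_le.
rewrite !powRM ?mulr_ge0 ?powR_ge0 // -!powRrM mulVf ?gt_eqF // powRr1 // => le_p.
have rho1 : rho `^ (- (theta / conj_exp p) * p) * rho `^ (theta * (p - 1)) = 1.
  have exp0 : - (theta / conj_exp p) * p + theta * (p - 1) = 0.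
    by rewrite /conj_exp; field; rewrite subr_eq0 !gt_eqF.
  by rewrite -powRD ?exp0 ?powRr0 // (gt_eqF rho0) implybT.
apply: le_trans (ler_wpM2r (powR_ge0 _ _) le_p) _.
rewrite [leLHS](_ : _ = c `^ p * J *
  (rho `^ (- (theta / conj_exp p) * p) * rho `^ (theta * (p - 1)))); last by ring.
by rewrite rho1 mulr1.
Qed.

End real_inequalities.

Section lifespan.
Context {R : realType} {N : nat} (C : set 'rV[R]_N) (eta : R -> R)
  (p alpha delta C0 R1 theta T : R) (w : 'rV[R]_N -> R -> R).
Hypothesis eta_cutoff : cutoff eta.
Hypothesis p_gt1 : 1 < p.
Hypothesis delta_gt0 : 0 < delta.
Hypothesis C0_gt0 : 0 < C0.
Hypothesis R1_gt0 : 0 < R1.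
Hypothesis w_ge0 : forall x t, C x -> 0 <= t < T -> 0 <= w x t.
Hypothesis w_loc_int : forall T', 0 < T' < T ->
  (iint [set z : 'rV[R]_N * R | C z.1 /\ (0 <= z.2 <= T')%R] w < +oo)%E.
Hypothesis test_ineq : forall r, R1 <= r < T ->
  (delta%:E + iint (PR alpha r C) (fun x t => (w x t * psiR eta p alpha r x t)%R)
   <= (C0 * r `^ (- (theta / conj_exp p)))%R%:E *
      (iint (PR alpha r C) (fun x t => (w x t * psiR_star eta p alpha r x t)%R))
        `^ (p^-1)%R)%E.

Let w_ge0_PR r (z : 'rV[R]_N * R) : r < T -> PR alpha r C z -> 0 <= w z.1 z.2.
Proof.
case: z => x t rT /PR_le [Cx t0 tr]; apply: w_ge0 => //.
by rewrite t0 (le_lt_trans tr rT).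
Qed.

Let grid_in d (M j : nat) : 0 < d -> grid R1 d M < T -> (j <= M)%N ->
  0 < grid R1 d j < T.
Proof.
by move=> d0 MT jM; rewrite grid_gt0 // (le_lt_trans (grid_le R1_gt0 (ltW d0) jM)).
Qed.

Let J r := fine (iint (PR alpha r C) (fun x t => w x t * psiR_star eta p alpha r x t)).

Lemma iint_wpsiR_star_fin_num r : 0 < r < T ->
  iint (PR alpha r C) (fun x t => w x t * psiR_star eta p alpha r x t) \is a fin_num.
Proof.
case/andP=> r0 rT; rewrite ge0_fin_numE; last first.
  by apply: iint_ge0 => z; apply: wpsiR_star_ge0 => /w_ge0_PR; apply.
apply: le_lt_trans (w_loc_int (T' := r) _); last by rewrite r0.
apply: le_iint => [z|[x t]]; first by apply: wpsiR_star_ge0 => /w_ge0_PR; apply.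
rewrite /patch; case: ifP => [/[1!in_setE] xt_r|_]; last first.
  case: ifP => [/set_mem [/= Cx /andP[t0 tr]] | _]; last exact: lexx.
  by apply: w_ge0 => //; rewrite t0 (le_lt_trans tr rT).
have [Cx t0 tr] := PR_le xt_r; rewrite (mem_set (_ : [set z | _] (x, t))) /=; last first.
  by split=> //; rewrite t0.
rewrite ler_piMr ?psiR_star_le1 //; exact: (w_ge0_PR rT xt_r).
Qed.

Let J_ge0 r : 0 < r < T -> 0 <= J r.
Proof.
case/andP=> r0 rT; apply: fine_ge0; apply: iint_ge0 => z.
by apply: wpsiR_star_ge0 => /w_ge0_PR; apply.
Qed.

Lemma grid_differential_ineq (d : R) (m : nat) : 0 < d -> grid R1 d m.+1 < T ->
  (delta + d / (ln 2 + d) * \sum_(j < m.+1) J (grid R1 d j.+1)) `^ p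
    * grid R1 d m.+1 `^ (theta * (p - 1)) <= C0 `^ p * J (grid R1 d m.+1).
Proof.
move=> d0 rT; set rho := grid R1 d m.+1; set k := d / (ln 2 + d).
have k0 : 0 <= k by rewrite divr_ge0 ?addr_ge0 ?ln_ge0 ?ler1n ?ltW.
have rho0 : 0 < rho := grid_gt0 d m.+1 R1_gt0.
have grid_T j : (j <= m.+1)%N -> 0 < grid R1 d j < T := grid_in d0 rT.
have R1_rho : R1 <= rho by have := grid_le R1_gt0 (ltW d0) (leq0n m.+1); rewrite grid0.
have := test_ineq (r := rho); rewrite R1_rho rT => /(_ isT).
rewrite -(fineK (iint_wpsiR_star_fin_num (grid_T _ (leqnn _)))) poweR_EFin -EFinM.
set I := iint _ (fun x t => _ * psiR _ _ _ _ _ _); move=> le_I.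
have I0 : (0 <= I)%E.
  by apply: iint_ge0 => z; apply: wpsiR_ge0 => /w_ge0_PR; apply.
have I_fin : I \is a fin_num.
  rewrite ge0_fin_numE //; apply: le_lt_trans (le_trans _ le_I) (ltry _).
  by apply: leeDr; rewrite lee_fin ltW.
have sum_le : k * \sum_(j < m.+1) J (grid R1 d j.+1) <= fine I.
  rewrite -lee_fin fineK // mulr_sumr -sumEFin.
  under eq_bigr => j _ do rewrite EFinM fineK ?iint_wpsiR_star_fin_num ?grid_T //.
  apply: (sum_iint_le
    (f := fun (j : 'I_m.+1) x t => w x t * psiR_star eta p alpha (grid R1 d j.+1) x t)
    (D := fun j : 'I_m.+1 => PR alpha (grid R1 d j.+1) C)) => // [j z _ | [x t]].
    by apply: wpsiR_star_ge0 => /w_ge0_PR; apply; case/andP: (grid_T j.+1 (ltn_ord j)).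
  have := grid_wpsiR_star_sum_le eta_cutoff p_gt1 (x := x) (t := t) R1_gt0 d0
    (w_ge0_PR rT).
  by rewrite /wpsiR_star /wpsiR.
have J0 : 0 <= J rho := J_ge0 (grid_T _ (leqnn _)).
have y0 : 0 <= delta + k * \sum_(j < m.+1) J (grid R1 d j.+1).
  apply: addr_ge0 (ltW delta_gt0) (mulr_ge0 k0 (sumr_ge0 _ _)) => j _.
  exact/J_ge0/grid_T.
have le_I' : delta + fine I <= C0 * rho `^ (- (theta / conj_exp p)) * J rho `^ p^-1.
  by rewrite -lee_fin EFinD fineK.
have le_y : delta + k * \sum_(j < m.+1) J (grid R1 d j.+1)
    <= C0 * rho `^ (- (theta / conj_exp p)) * J rho `^ p^-1.
  exact: le_trans (lerD (lexx delta) sum_le) le_I'.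
exact: powR_conj_le p_gt1 y0 (ltW C0_gt0) rho0 J0 le_y.
Qed.

Lemma grid_estimate (d : R) (M : nat) : 0 < d -> grid R1 d M < T ->
  (p - 1) * d * \sum_(m < M) grid R1 d m.+1 `^ (theta * (p - 1))
  <= C0 `^ p * (ln 2 + d) * delta `^ (1 - p).
Proof.
move=> d0 MT; set L := ln 2 + d.
have L0 : 0 < L by rewrite addr_gt0 // ln_gt0 // ltr1n.
have grid_T j : (j <= M)%N -> 0 < grid R1 d j < T := grid_in d0 MT.
have := discrete_comparison (J := fun j => J (grid R1 d j.+1))
  (W := fun m => grid R1 d m.+1 `^ (theta * (p - 1)))
  (divr_ge0 (ltW d0) (ltW L0)) delta_gt0 (powR_ge0 C0 p) p_gt1
  (fun m mM => J_ge0 (grid_T m.+1 mM))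
  (fun m mM => grid_differential_ineq d0 (proj2 (andP (grid_T _ mM)))).
set S := \sum_(m < M) _; move=> /(ler_wpM2r (ltW L0)).
have -> : (p - 1) * (d / L) * S * L = (p - 1) * d * S by field; rewrite gt_eqF.
by rewrite [C0 `^ p * L * _]mulrAC.
Qed.

Let grid_T_interval T' (M : nat) : R1 < T' < T -> (0 < M)%N ->
  [/\ 0 < ln (T' / R1) / M%:R, grid R1 (ln (T' / R1) / M%:R) M < T &
      ln (T' / R1) = ln T' - ln R1].
Proof.
case/andP=> R1T' T'T M0; have T'0 := lt_trans R1_gt0 R1T'.
have TR1 : 1 < T' / R1 by rewrite ltr_pdivlMr // mul1r.
split; first by rewrite divr_gt0 ?ln_gt0 // ltr0n.
  by rewrite grid_endpoint // lnK ?posrE ?(lt_trans ltr01) // mulrC divfK ?gt_eqF.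
by rewrite ln_div ?posrE.
Qed.

Lemma lifespan_theta0 T' : theta = 0 -> R1 < T' < T ->
  ln T' <= ln R1 + ln 2 * (p - 1)^-1 * C0 `^ p * delta `^ (- (p - 1)).
Proof.
move=> theta0 T'_in; have p10 : 0 < p - 1 by rewrite subr_gt0.
set L := ln (T' / R1); set K := C0 `^ p * delta `^ (1 - p).
apply: (le_of_le_addn (c := (p - 1)^-1 * K * L)) => M M0.
have [d0 MT lnT'] := grid_T_interval T'_in M0; set d := L / M%:R in d0 MT *.
have Md : M%:R * d = L by rewrite /d mulrC divfK // pnatr_eq0 -lt0n.
have := grid_estimate d0 MT; rewrite theta0 mul0r.
under eq_bigr do rewrite powRr0.
rewrite sumr_const card_ord -mulrA [d * _]mulrC Md => est.
rewrite opprB (_ : _ + (p - 1)^-1 * K * L / M%:R =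
  ln R1 + (p - 1)^-1 * (C0 `^ p * (ln 2 + d) * delta `^ (1 - p))); last first.
  by rewrite /K /d; ring.
rewrite -lerBlDl -lnT' -(ler_pM2l p10) mulrA mulfV ?gt_eqF // mul1r.
exact: est.
Qed.

Lemma lifespan_theta_gt0 T' : 0 < theta -> R1 < T' < T ->
  T' `^ ((p - 1) * theta) <=
    R1 `^ ((p - 1) * theta) + ln 2 * C0 `^ p * theta * delta `^ (- (p - 1)).
Proof.
move=> theta0 T'_in; have p10 : 0 < p - 1 by rewrite subr_gt0.
have T'0 : 0 < T' by case/andP: T'_in => /(lt_trans R1_gt0).
set a := (p - 1) * theta; have a0 : 0 < a by rewrite mulr_gt0.
set L := ln (T' / R1); set K := C0 `^ p * delta `^ (1 - p).
apply: (le_of_le_addn (c := theta * K * L)) => M M0.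
have [d0 MT _] := grid_T_interval T'_in M0; set d := L / M%:R in d0 MT *.
have Md : M%:R * d = L by rewrite /d mulrC divfK // pnatr_eq0 -lt0n.
have grid_pow m : grid R1 d m `^ (theta * (p - 1)) = R1 `^ a * expR (a * (m%:R * d)).
  rewrite powRM ?ltW ?expR_gt0 // -expRM; congr (_ `^ _ * expR _); rewrite /a; ring.
have := grid_estimate d0 MT; under eq_bigr do rewrite grid_pow.
rewrite -mulr_sumr; set X := \sum_(m < M) _ => est.
have riem := expR_riemann_le M a0 (ltW d0); rewrite -mulr_sumr -/X ler_pdivrMr // in riem.
have -> : T' `^ a = R1 `^ a * expR (a * (M%:R * d)).
  rewrite Md [a * L]mulrC expRM lnK ?posrE ?divr_gt0 //.
  by rewrite -powRM ?ltW ?divr_gt0 // mulrC divfK ?gt_eqF.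
have h1 := ler_wpM2l (powR_ge0 R1 a) riem; have h2 := ler_wpM2l (ltW theta0) est.
have key : R1 `^ a * (expR (a * (M%:R * d)) - 1) <= theta * (K * (ln 2 + d)).
  apply: (le_trans h1); rewrite (_ : R1 `^ a * _ = theta * ((p - 1) * d * (R1 `^ a * X))).
    by rewrite /K [C0 `^ p * _ * _]mulrAC.
  by rewrite /a; ring.
rewrite opprB (_ : _ + theta * K * L / M%:R = R1 `^ a + theta * (K * (ln 2 + d))).
  by move: key; rewrite mulrBr mulr1 lerBlDl.
by rewrite /K /d; ring.
Qed.

End lifespan.

Theorem lemma3p13 (R : realType) (N : nat) (C : set 'rV[R]_N) (eta : R -> R)
  (p alpha delta C0 R1 theta T : R) (w : 'rV[R]_N -> R -> R) :
  cone_domain C -> cutoff eta ->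
  1 < p -> 0 <= alpha <= 1 ->
  0 < delta -> 0 < C0 -> 0 < R1 -> 0 <= theta -> R1 < T ->
  (* 0 <= w in L^1_loc([0,T); L^1(C_Sigma)) *)
  (forall x t, C x -> 0 <= t < T -> 0 <= w x t) ->
  measurable_fun [set z : N.-tuple R * R | C (tup2row z.1) /\ 0 <= z.2 < T]
    (fun z => w (tup2row z.1) z.2) ->
  (forall T', 0 < T' < T ->
     (iint [set z : 'rV[R]_N * R | C z.1 /\ (0 <= z.2 <= T')%R] w < +oo)%E) ->
  (forall Rr, R1 <= Rr < T ->
     (delta%:E + iint (PR alpha Rr C) (fun x t => (w x t * psiR eta p alpha Rr x t)%R)
      <= (C0 * Rr `^ (- (theta / conj_exp p)))%R%:E *
         (iint (PR alpha Rr C) (fun x t => (w x t * psiR_star eta p alpha Rr x t)%R))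
           `^ (p^-1)%R)%E) ->
  (0 < theta ->
     T <= (R1 `^ ((p - 1) * theta)
           + ln 2 * C0 `^ p * theta * delta `^ (- (p - 1))) `^ (((p - 1) * theta)^-1)) /\
  (theta = 0 ->
     T <= expR (ln R1 + ln 2 * (p - 1)^-1 * C0 `^ p * delta `^ (- (p - 1)))).
Proof.
move=> _ eta_cutoff p_gt1 _ delta_gt0 C0_gt0 R1_gt0 _ R1T w_ge0 _ w_loc_int test_ineq.
have lifespan_gt0 := lifespan_theta_gt0 eta_cutoff p_gt1 delta_gt0 C0_gt0 R1_gt0 w_ge0
  w_loc_int test_ineq.
have lifespan0 := lifespan_theta0 eta_cutoff p_gt1 delta_gt0 C0_gt0 R1_gt0 w_ge0
  w_loc_int test_ineq.
split=> [theta_gt0 | theta0]; apply: (@le_of_forall_lt _ R1 T) => // T' T'_in.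
  have a_gt0 : 0 < (p - 1) * theta by rewrite mulr_gt0 ?subr_gt0.
  have T'_gt0 : 0 < T' by case/andP: T'_in => /(lt_trans R1_gt0).
  have -> : T' = (T' `^ ((p - 1) * theta)) `^ ((p - 1) * theta)^-1.
    by rewrite -powRrM mulfV ?gt_eqF // powRr1 // ltW.
  have le_T' := lifespan_gt0 _ theta_gt0 T'_in.
  have bound_ge0 := le_trans (powR_ge0 _ _) le_T'.
  apply: ge0_ler_powR le_T'; rewrite ?nnegrE ?powR_ge0 // invr_ge0.
  exact: ltW.
rewrite -ler_ln ?posrE ?expR_gt0 ?expRK ?(lt_trans R1_gt0) //; last by case/andP: T'_in.
exact: lifespan0.
Qed.
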